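(* For every prime power $q$, the equation $M_q\!\left(\frac{q-1}{x(q+1)}\right)=\frac{1}{x(q+1)}$ has a unique solution $x=c_q$ with $x\ge 1$. Moreover $c_q>1$.
   Context: $H_q(x)=x\log_q(q-1)-x\log_q x-(1-x)\log_q(1-x)$ is the $q$-ary entropy and $M_q(\delta)=H_q\!\left(\frac1q\left(q-1-(q-2)\delta-2\sqrt{(q-1)\delta(1-\delta)}\right)\right)$. $M_q$ is continuous and strictly decreasing on $[0,1-1/q]$ with $M_q(0)=1$ and $M_q(1-1/q)=0$. *)

From Stdlib Require Import Reals ZArith Znumtheory.
Open Scope R_scope.

Definition logb (q y : R) : R := ln y / ln q.

(* q-ary entropy H_q(x) = x log_q(q-1) - x log_q x - (1-x) log_q(1-x).
   Note: Stdlib's ln 0 = 0, so the convention 0 * log 0 = 0 holds. *)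
Definition Hq (q x : R) : R :=
  x * logb q (q - 1) - x * logb q x - (1 - x) * logb q (1 - x).

Definition Mq (q delta : R) : R :=
  Hq q ((q - 1 - (q - 2) * delta - 2 * sqrt ((q - 1) * delta * (1 - delta))) / q).

Definition prime_power (q : nat) : Prop :=
  exists p k : nat, prime (Z.of_nat p) /\ (1 <= k)%nat /\ q = (p ^ k)%nat.

(* For x >= 1 put delta(x) = (q - 1) / (x (q + 1)), which lies in (0, 1 - 1/q).
   The argument of H_q in M_q(delta) equals (sqrt((q - 1)(1 - delta)) - sqrt delta)^2 / q,
   which decreases from 1 - 1/q as delta grows, and H_q increases on (0, 1 - 1/q]
   up to H_q(1 - 1/q) = 1.  Hence M_q(delta(x)) - 1/(x (q + 1)) is continuous and
   strictly increasing in x, and tends to M_q(0) = 1 > 0.  At x = 1 it is negative: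
   the argument of H_q is then (q - 1)(3 - 2 sqrt 2) / (q (q + 1)), and the bound
   -(1 - g) ln (1 - g) <= g makes the entropy smaller than 1/(q + 1) as soon as
   q >= 2.  The intermediate value theorem gives the unique root c_q > 1. *)

From Stdlib Require Import Reals Ranalysis5 Lra Lia Znumtheory.
From Coquelicot Require Import Coquelicot.
Open Scope R_scope.

Lemma ln_le_sub_1 (y : R) : 0 < y -> ln y <= y - 1.
Proof. intros Hy. pose proof (exp_ineq1_le (ln y)) as H. rewrite exp_ln in H by exact Hy. lra. Qed.

Lemma ln_gt_0 (x : R) : 1 < x -> 0 < ln x.
Proof. intros Hx. rewrite <- ln_1. apply ln_increasing; lra. Qed.

Lemma ln_succ_le (x : R) : 0 < x -> ln (x + 1) <= ln x + / x.
Proof.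
  intros Hx. pose proof (ln_le_sub_1 ((x + 1) / x) ltac:(apply Rdiv_lt_0_compat; lra)) as H.
  rewrite ln_div in H by lra. replace ((x + 1) / x - 1) with (/ x) in H by (field; lra). lra.
Qed.

Lemma entropy_tail_le (g : R) : g < 1 -> - ((1 - g) * ln (1 - g)) <= g.
Proof.
  intros Hg. pose proof (ln_le_sub_1 (/ (1 - g)) ltac:(apply Rinv_0_lt_compat; lra)) as H.
  rewrite ln_Rinv in H by lra.
  apply (Rmult_le_compat_l (1 - g)) in H; [|lra].
  replace ((1 - g) * (/ (1 - g) - 1)) with g in H by (field; lra). lra.
Qed.

Lemma sqrt2_bounds : 1.414 <= sqrt 2 <= 17 / 12.
Proof. pose proof (sqrt_sqrt 2 ltac:(lra)). pose proof (sqrt_pos 2). nra. Qed.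

Lemma ratio_lt_1 (Q : R) : 0 < Q -> (Q - 1) / Q < 1.
Proof.
  intros HQ. apply (Rmult_lt_reg_r Q); [lra|].
  unfold Rdiv. rewrite Rmult_assoc, Rinv_l; lra.
Qed.

Lemma lt_ratio_lt_mul_compl (Q d : R) : 1 < Q -> d < (Q - 1) / Q -> d < (Q - 1) * (1 - d).
Proof.
  intros HQ Hd. apply (Rmult_lt_compat_r Q) in Hd; [|lra].
  unfold Rdiv in Hd. rewrite Rmult_assoc, Rinv_l in Hd; lra.
Qed.

Lemma Hq_derive (Q y : R) : 1 < Q -> 0 < y < 1 ->
  is_derive (Hq Q) y ((ln (Q - 1) - ln y + ln (1 - y)) / ln Q).
Proof.
  intros HQ Hy. pose proof (ln_gt_0 Q HQ).
  unfold Hq, logb. auto_derive; [lra|]. unfold Rminus. field. lra.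
Qed.

Lemma Hq_continuous (Q y : R) : 1 < Q -> 0 < y < 1 -> continuous (Hq Q) y.
Proof.
  intros HQ Hy. apply (@ex_derive_continuous R_AbsRing R_NormedModule).
  eexists. exact (Hq_derive Q y HQ Hy).
Qed.

Lemma Hq_increasing (Q a b : R) : 1 < Q -> 0 < a < b -> b <= (Q - 1) / Q -> Hq Q a < Hq Q b.
Proof.
  intros HQ [Ha Hab] Hb.
  pose proof (ln_gt_0 Q HQ) as HL. pose proof (ratio_lt_1 Q ltac:(lra)).
  destruct (MVT_cor2 (Hq Q) (fun y => (ln (Q - 1) - ln y + ln (1 - y)) / ln Q) a b Hab)
    as [c [Hmvt Hc]].
  { intros c Hc. apply is_derive_Reals, Hq_derive; lra. }
  assert (Hpos : 0 < (ln (Q - 1) - ln c + ln (1 - c)) / ln Q).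
  { apply Rdiv_lt_0_compat; [|exact HL].
    pose proof (lt_ratio_lt_mul_compl Q c HQ ltac:(lra)).
    assert (Hln : ln c < ln ((Q - 1) * (1 - c))) by (apply ln_increasing; lra).
    rewrite ln_mult in Hln by lra. lra. }
  nra.
Qed.

Lemma Hq_max (Q : R) : 1 < Q -> Hq Q ((Q - 1) / Q) = 1.
Proof.
  intros HQ. pose proof (ln_gt_0 Q HQ).
  unfold Hq, logb. replace (1 - (Q - 1) / Q) with (/ Q) by (field; lra).
  rewrite ln_Rinv, ln_div by lra. field. lra.
Qed.

Lemma Hq_mul_ln_le (Q g : R) : 1 < Q -> 0 < g < 1 ->
  Hq Q g * ln Q <= g * (ln (Q - 1) - ln g + 1).
Proof.
  intros HQ Hg. pose proof (ln_gt_0 Q HQ).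
  pose proof (entropy_tail_le g ltac:(lra)).
  unfold Hq, logb.
  replace ((g * (ln (Q - 1) / ln Q) - g * (ln g / ln Q) - (1 - g) * (ln (1 - g) / ln Q)) * ln Q)
    with (g * ln (Q - 1) - g * ln g - (1 - g) * ln (1 - g)) by (field; lra).
  lra.
Qed.

Definition Mq_arg (Q d : R) : R :=
  (Q - 1 - (Q - 2) * d - 2 * sqrt ((Q - 1) * d * (1 - d))) / Q.

Lemma Mq_Hq (Q d : R) : Mq Q d = Hq Q (Mq_arg Q d).
Proof. reflexivity. Qed.

Lemma Mq_arg_square (Q d : R) : 1 < Q -> 0 <= d <= 1 ->
  Mq_arg Q d = (sqrt ((Q - 1) * (1 - d)) - sqrt d) ^ 2 / Q.
Proof.
  intros HQ Hd. unfold Mq_arg.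
  replace ((Q - 1) * d * (1 - d)) with ((Q - 1) * (1 - d) * d) by ring.
  rewrite sqrt_mult by nra.
  pose proof (sqrt_sqrt ((Q - 1) * (1 - d)) ltac:(nra)) as Ha.
  pose proof (sqrt_sqrt d ltac:(lra)) as Hb.
  set (a := sqrt ((Q - 1) * (1 - d))) in *. set (b := sqrt d) in *.
  replace ((a - b) ^ 2) with (a * a - 2 * (a * b) + b * b) by ring.
  rewrite Ha, Hb. field. lra.
Qed.

Lemma Mq_arg_0 (Q : R) : Q <> 0 -> Mq_arg Q 0 = (Q - 1) / Q.
Proof.
  intros HQ. unfold Mq_arg. replace ((Q - 1) * 0 * (1 - 0)) with 0 by ring.
  rewrite sqrt_0. field. exact HQ.
Qed.

Lemma Mq_arg_decreasing (Q d1 d2 : R) : 1 < Q -> 0 <= d1 < d2 -> d2 < (Q - 1) / Q ->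
  Mq_arg Q d2 < Mq_arg Q d1.
Proof.
  intros HQ Hd12 Hd2. pose proof (lt_ratio_lt_mul_compl Q d2 HQ Hd2).
  rewrite !Mq_arg_square by nra.
  assert (sqrt d2 < sqrt ((Q - 1) * (1 - d2))) by (apply sqrt_lt_1; nra).
  assert (sqrt ((Q - 1) * (1 - d2)) < sqrt ((Q - 1) * (1 - d1))) by (apply sqrt_lt_1; nra).
  assert (sqrt d1 < sqrt d2) by (apply sqrt_lt_1; lra).
  pose proof (sqrt_pos d1).
  unfold Rdiv. apply Rmult_lt_compat_r; [apply Rinv_0_lt_compat; lra | nra].
Qed.

Lemma Mq_arg_bounds (Q d : R) : 1 < Q -> 0 <= d < (Q - 1) / Q ->
  0 < Mq_arg Q d <= (Q - 1) / Q.
Proof.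
  intros HQ [Hd0 Hd]. pose proof (lt_ratio_lt_mul_compl Q d HQ Hd). split.
  - rewrite Mq_arg_square by nra.
    assert (sqrt d < sqrt ((Q - 1) * (1 - d))) by (apply sqrt_lt_1; nra).
    apply Rdiv_lt_0_compat; nra.
  - rewrite <- Mq_arg_0 by lra. destruct Hd0 as [Hd0 | <-]; [|lra].
    left. apply Mq_arg_decreasing; lra.
Qed.

Lemma Mq_arg_continuous (Q d : R) : continuous (Mq_arg Q) d.
Proof.
  unfold Mq_arg, Rdiv. apply (continuous_mult (fun d => _) (fun _ => / Q)); [|apply continuous_const].
  apply (continuous_minus (fun d => _) (fun d => 2 * sqrt _)).
  - apply (continuous_minus (fun _ => Q - 1) (fun d => (Q - 2) * d)); [apply continuous_const|].
    apply (continuous_mult (fun _ => Q - 2) (fun d => d)); [apply continuous_const | apply continuous_id].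
  - apply (continuous_mult (fun _ => 2) (fun d => sqrt _)); [apply continuous_const|].
    apply continuous_sqrt_comp.
    apply (continuous_mult (fun d => (Q - 1) * d) (fun d => 1 - d)).
    + apply (continuous_mult (fun _ => Q - 1) (fun d => d)); [apply continuous_const | apply continuous_id].
    + apply (continuous_minus (fun _ => 1) (fun d => d)); [apply continuous_const | apply continuous_id].
Qed.

Lemma Mq_0 (Q : R) : 1 < Q -> Mq Q 0 = 1.
Proof. intros HQ. rewrite Mq_Hq, Mq_arg_0 by lra. exact (Hq_max Q HQ). Qed.

Lemma Mq_decreasing (Q d1 d2 : R) : 1 < Q -> 0 <= d1 < d2 -> d2 < (Q - 1) / Q ->
  Mq Q d2 < Mq Q d1.
Proof.
  intros HQ Hd12 Hd2. rewrite !Mq_Hq.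
  pose proof (Mq_arg_bounds Q d1 HQ ltac:(lra)).
  pose proof (Mq_arg_bounds Q d2 HQ ltac:(lra)).
  pose proof (Mq_arg_decreasing Q d1 d2 HQ Hd12 Hd2).
  apply Hq_increasing; lra.
Qed.

Lemma Mq_continuous (Q d : R) : 1 < Q -> 0 <= d < (Q - 1) / Q -> continuous (Mq Q) d.
Proof.
  intros HQ Hd. pose proof (Mq_arg_bounds Q d HQ Hd). pose proof (ratio_lt_1 Q ltac:(lra)).
  apply (continuous_comp (Mq_arg Q) (Hq Q)); [apply Mq_arg_continuous|].
  apply Hq_continuous; lra.
Qed.

Lemma Mq_arg_at_ratio (Q : R) : 1 < Q ->
  Mq_arg Q ((Q - 1) / (Q + 1)) = (Q - 1) * (3 - 2 * sqrt 2) / (Q * (Q + 1)).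
Proof.
  intros HQ. set (d := (Q - 1) / (Q + 1)).
  assert (Hd : 0 <= d) by (left; apply Rdiv_lt_0_compat; lra).
  assert (Hsq : sqrt ((Q - 1) * d * (1 - d)) = sqrt 2 * d).
  { replace ((Q - 1) * d * (1 - d)) with (2 * (d * d)) by (unfold d; field; lra).
    rewrite sqrt_mult, sqrt_square by nra. reflexivity. }
  unfold Mq_arg. rewrite Hsq. unfold d. field. lra.
Qed.

(* Used with c = 3 - 2 sqrt 2, which lies in [1/6, 0.172]. *)
Lemma entropy_budget (Q c : R) : 2 <= Q -> 1 / 6 <= c <= 0.172 ->
  (Q - 1) * c * (2 * ln Q + / Q - ln c + 1) < Q * ln Q.
Proof.
  intros HQ Hc.
  assert (Hl2 : / 2 < ln 2) by exact ln_lt_2.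
  assert (Hl3 : 1 <= ln 3) by (rewrite <- (ln_exp 1); apply ln_le; [apply exp_pos | apply exp_le_3]).
  assert (Hl32 : ln 3 <= 2 * ln 2).
  { replace (2 * ln 2) with (ln (2 * 2)) by (rewrite ln_mult; lra). apply ln_le; lra. }
  assert (Hc6 : - ln c <= ln 2 + ln 3).
  { assert (H : ln (/ c) <= ln (/ (1 / 6))) by (apply ln_le;
      [apply Rinv_0_lt_compat | apply Rinv_le_contravar]; lra).
    replace (/ (1 / 6)) with (2 * 3) in H by field.
    rewrite ln_Rinv, ln_mult in H by lra. exact H. }
  assert (Hinv : 0 < / Q <= / 2) by (split; [apply Rinv_0_lt_compat | apply Rinv_le_contravar]; lra).
  set (A := 2 * ln Q + / Q - ln c + 1).
  assert (Hc1 : ln c < ln 1) by (apply ln_increasing; lra). rewrite ln_1 in Hc1.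
  assert (HA : 0 < A) by (pose proof (ln_gt_0 Q ltac:(lra)); unfold A; lra).
  apply Rle_lt_trans with ((Q - 1) * 0.172 * A).
  { apply Rmult_le_compat_r; [lra|]. apply Rmult_le_compat_l; lra. }
  destruct (Rle_lt_dec Q 3) as [HQ3 | HQ3].
  - assert (ln 2 <= ln Q) by (apply ln_le; lra).
    assert (HA' : 0.172 * A < 3 / 2 * ln Q) by (unfold A; lra).
    assert (0 <= (3 - Q) * A) by (apply Rmult_le_pos; lra).
    nra.
  - assert (ln 3 <= ln Q) by (apply ln_le; lra).
    assert (ln 2 <= ln 3) by (apply ln_le; lra).
    assert (/ Q <= / 3) by (apply Rinv_le_contravar; lra).
    assert (HA' : 0.172 * A < ln Q) by (unfold A; lra).
    nra.
Qed.

Lemma Mq_at_ratio_lt (Q : R) : 2 <= Q -> Mq Q ((Q - 1) / (Q + 1)) < 1 / (Q + 1).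
Proof.
  intros HQ. pose proof (ln_gt_0 Q ltac:(lra)) as HL.
  pose proof sqrt2_bounds.
  set (c := 3 - 2 * sqrt 2). assert (Hc : 1 / 6 <= c <= 0.172) by (unfold c; lra).
  set (g := (Q - 1) * c / (Q * (Q + 1))).
  assert (Hg : 0 < g < 1).
  { unfold g. split; [apply Rdiv_lt_0_compat; nra|].
    apply (Rmult_lt_reg_r (Q * (Q + 1))); [nra|].
    unfold Rdiv. rewrite Rmult_assoc, Rinv_l by nra. nra. }
  assert (Hlng : - ln g <= 2 * ln Q + / Q - ln (Q - 1) - ln c).
  { unfold g. rewrite ln_div, !ln_mult by nra. pose proof (ln_succ_le Q ltac:(lra)). lra. }
  pose proof (entropy_budget Q c HQ Hc) as Hbudget.
  rewrite Mq_Hq, Mq_arg_at_ratio by lra. fold c. fold g.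
  apply (Rmult_lt_reg_r (ln Q)); [exact HL|].
  eapply Rle_lt_trans; [apply Hq_mul_ln_le; lra|].
  apply Rle_lt_trans with (g * (2 * ln Q + / Q - ln c + 1)); [apply Rmult_le_compat_l; lra|].
  apply (Rmult_lt_reg_r (Q * (Q + 1))); [nra|].
  replace (g * (2 * ln Q + / Q - ln c + 1) * (Q * (Q + 1)))
    with ((Q - 1) * c * (2 * ln Q + / Q - ln c + 1)) by (unfold g; field; lra).
  replace (1 / (Q + 1) * ln Q * (Q * (Q + 1))) with (Q * ln Q) by (field; lra).
  exact Hbudget.
Qed.

Lemma div_decreasing (a x y : R) : 0 < a -> 0 < x -> x < y -> a / y < a / x.
Proof.
  intros Ha Hx Hxy. unfold Rdiv. apply Rmult_lt_compat_l; [exact Ha|].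
  apply Rinv_lt_contravar; nra.
Qed.

Lemma increasing_unique_root (f : R -> R) (a b : R) : a < b ->
  (forall x, a <= x <= b -> continuous f x) ->
  (forall x y, a <= x -> x < y -> f x < f y) ->
  f a < 0 -> 0 < f b ->
  exists c, a < c /\ f c = 0 /\ forall x, a <= x -> f x = 0 -> x = c.
Proof.
  intros Hab Hcont Hincr Ha Hb.
  destruct (IVT_interv f a b) as [c [Hc Hfc]]; try assumption.
  { intros x Hx. apply continuity_pt_filterlim, Hcont, Hx. }
  assert (Hac : a < c) by (destruct (Req_dec a c) as [<- | ]; lra).
  exists c. split; [exact Hac | split; [exact Hfc|]].
  intros x Hx Hfx. destruct (Rtotal_order x c) as [H | [H | H]]; [| exact H |].
  - pose proof (Hincr x c Hx H). lra.
  - pose proof (Hincr c x ltac:(lra) H). lra.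
Qed.

Section MqEquation.

Variable Q : R.
Hypothesis HQ : 2 <= Q.

Definition delta_at (x : R) : R := (Q - 1) / (x * (Q + 1)).

Definition gap (x : R) : R := Mq Q (delta_at x) - 1 / (x * (Q + 1)).

Lemma delta_at_bounds (x : R) : 1 <= x -> 0 < delta_at x < (Q - 1) / Q.
Proof.
  intros Hx. unfold delta_at. split; [apply Rdiv_lt_0_compat; nra|].
  apply (Rmult_lt_reg_r (x * (Q + 1) * Q)); [nra|].
  replace ((Q - 1) / (x * (Q + 1)) * (x * (Q + 1) * Q)) with ((Q - 1) * Q) by (field; nra).
  replace ((Q - 1) / Q * (x * (Q + 1) * Q)) with ((Q - 1) * (x * (Q + 1))) by (field; nra).
  apply Rmult_lt_compat_l; nra.
Qed.

Lemma gap_increasing (x y : R) : 1 <= x -> x < y -> gap x < gap y.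
Proof.
  intros Hx Hxy. unfold gap.
  pose proof (delta_at_bounds x Hx). pose proof (delta_at_bounds y ltac:(lra)).
  assert (delta_at y < delta_at x) by (unfold delta_at; apply div_decreasing; nra).
  assert (Mq Q (delta_at x) < Mq Q (delta_at y)) by (apply Mq_decreasing; lra).
  assert (1 / (y * (Q + 1)) < 1 / (x * (Q + 1))) by (apply div_decreasing; nra).
  lra.
Qed.

Lemma gap_continuous (x : R) : 1 <= x -> continuous gap x.
Proof.
  intros Hx. pose proof (delta_at_bounds x Hx).
  apply (continuous_minus (fun x => Mq Q (delta_at x)) (fun x => 1 / (x * (Q + 1)))).
  - apply (continuous_comp delta_at (Mq Q)); [|apply Mq_continuous; lra].
    apply (@ex_derive_continuous R_AbsRing R_NormedModule). unfold delta_at. auto_derive. nra.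
  - apply (@ex_derive_continuous R_AbsRing R_NormedModule). auto_derive. nra.
Qed.

Lemma gap_1_neg : gap 1 < 0.
Proof.
  unfold gap, delta_at. rewrite Rmult_1_l. pose proof (Mq_at_ratio_lt Q HQ). lra.
Qed.

Lemma gap_eventually_pos : exists X, 1 < X /\ 0 < gap X.
Proof.
  assert (Hratio : 0 < (Q - 1) / Q) by (apply Rdiv_lt_0_compat; lra).
  assert (Hcont : continuity_pt (Mq Q) 0).
  { apply continuity_pt_filterlim, Mq_continuous; lra. }
  destruct (Hcont (1 / 2) ltac:(lra)) as [eps [Heps Hnear]].
  set (K := (Q - 1) / (eps * (Q + 1))).
  assert (HK : 0 < K) by (apply Rdiv_lt_0_compat; nra).
  set (X := 1 + Rmax 1 K).
  assert (HX1 : 2 <= X) by (pose proof (Rmax_l 1 K); unfold X; lra).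
  assert (HXK : K < X) by (pose proof (Rmax_r 1 K); unfold X; lra).
  assert (Hdelta : delta_at X < eps).
  { replace eps with ((Q - 1) / (K * (Q + 1))) by (unfold K; field; lra).
    unfold delta_at; apply div_decreasing; nra. }
  pose proof (delta_at_bounds X ltac:(lra)).
  assert (Hclose : R_dist (Mq Q (delta_at X)) (Mq Q 0) < 1 / 2).
  { apply (Hnear (delta_at X)). unfold D_x, no_cond.
    simpl. unfold R_dist. rewrite Rminus_0_r, Rabs_pos_eq by lra. repeat split; lra. }
  unfold R_dist in Hclose. rewrite Mq_0 in Hclose by lra. apply Rabs_def2 in Hclose.
  assert (1 / (X * (Q + 1)) < 1 / 2) by (apply div_decreasing; nra).
  exists X. split; [lra|]. unfold gap. lra.
Qed.

Theorem Mq_equation_unique_root : exists c : R,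
    (1 <= c /\ Mq Q ((Q - 1) / (c * (Q + 1))) = 1 / (c * (Q + 1)))
    /\ (forall x : R, 1 <= x ->
          Mq Q ((Q - 1) / (x * (Q + 1))) = 1 / (x * (Q + 1)) -> x = c)
    /\ 1 < c.
Proof.
  destruct gap_eventually_pos as [X [HX HgapX]].
  destruct (increasing_unique_root gap 1 X HX) as [c [Hc [Hroot Huniq]]].
  - intros x Hx. apply gap_continuous. lra.
  - exact gap_increasing.
  - exact gap_1_neg.
  - exact HgapX.
  - exists c. unfold gap, delta_at in *. split; [split; lra|]. split; [|exact Hc].
    intros x Hx Heq. apply Huniq; [exact Hx | lra].
Qed.

End MqEquation.

Lemma prime_power_ge_2 (q : nat) : prime_power q -> (2 <= q)%nat.
Proof.
  intros [p [k [Hp [Hk ->]]]]. apply prime_ge_2 in Hp.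
  assert (p ^ 1 <= p ^ k)%nat by (apply Nat.pow_le_mono_r; lia).
  rewrite Nat.pow_1_r in H. lia.
Qed.

Theorem corollaryA2 (q : nat) (hq : prime_power q) :
  exists c : R,
    (1 <= c /\ Mq (INR q) ((INR q - 1) / (c * (INR q + 1))) = 1 / (c * (INR q + 1)))
    /\ (forall x : R, 1 <= x ->
          Mq (INR q) ((INR q - 1) / (x * (INR q + 1))) = 1 / (x * (INR q + 1)) ->
          x = c)
    /\ 1 < c.
Proof.
  apply Mq_equation_unique_root.
  apply (le_INR 2), prime_power_ge_2, hq.
Qed.
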